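(* Let $\mu\in\mathcal{D}(\mathrm{Mem}[S])$, let $\mathcal{S}=\{S_1,\dots,S_N\}$ be a partition of $S$, let $\mathcal{T}=\{T_1,\dots,T_N\}$ be a partition of a finite set $T$ of variables, and let $f_i:\mathrm{Mem}[S_i]\to\mathrm{Mem}[T_i]$ ($1\le i\le N$) be either all non-decreasing or all non-increasing with respect to the pointwise orders. Let $\mu'\in\mathcal{D}(\mathrm{Mem}[T])$ be the distribution of the memory $f_1(p_{S_1}m)\bowtie\cdots\bowtie f_N(p_{S_N}m)$ for $m\sim\mu$, where $\bowtie$ denotes union of memories with disjoint domains. If $\mu$ is $\mathcal{S}$-PNA, then $\mu'$ is $\mathcal{T}$-PNA.
   Context: Values are real numbers; for finite $S$, $\mathrm{Mem}[S]$ is the set of maps $S\to\mathbb{R}$ ordered pointwise; $p_A$ is restriction; $\mathcal{D}(\cdot)$ denotes countably supported probability distributions. A partition is a set of pairwise disjoint nonempty sets; $\mathcal{T}$ coarsens $\mathcal{S}$ if $\bigcup\mathcal{T}=\bigcup\mathcal{S}$ and each element of $\mathcal{T}$ is a union of a subfamily of $\mathcal{S}$. For a partition $\mathcal{S}$ with $\bigcup\mathcal{S}\subseteq\mathrm{dom}(\mu)$, $\mu$ is $\mathcal{S}$-PNA if for every $\mathcal{T}$ coarsening $\mathcal{S}$ and every family $(f_A:\mathrm{Mem}[A]\to[0,\infty))_{A\in\mathcal{T}}$ all non-decreasing or all non-increasing, $\mathbb{E}_{m\sim\mu}[\prod_{A\in\mathcal{T}}f_A(p_Am)]\le\prod_{A\in\mathcal{T}}\mathbb{E}_{m\sim\mu}[f_A(p_Am)]$.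 *)

From HB Require Import structures.
From mathcomp Require Import all_boot all_order all_algebra.
From mathcomp Require Import finmap.
From mathcomp Require Import boolp classical_sets cardinality reals ereal esum.
Set Implicit Arguments. Unset Strict Implicit. Unset Printing Implicit Defensive.
Import Order.TTheory GRing.Theory Num.Theory.
Local Open Scope classical_set_scope.
Local Open Scope ring_scope.
Local Open Scope fset_scope.

Section Defs.
Variables (V : choiceType) (R : realType).

Definition Memory (S : {fset V}) : choiceType := {ffun S -> R}.

Definition mem_le (S : {fset V}) (m1 m2 : Memory S) : Prop := forall x, m1 x <= m2 x.

Definition mem_ext (S : {fset V}) (m : Memory S) (v : V) : R :=
  match insub v : option S with Some s => m s | None => 0 end.

(* restriction p_A : Mem[B] -> Memory[A] (meaningful when A `<=` B) *)
Definition restr (A B : {fset V}) (m : Memory B) : Memory A := [ffun a : A => mem_ext m (val a)].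

Definition nondecr (X : Type) (leX : X -> X -> Prop) (Y : Type) (leY : Y -> Y -> Prop)
  (f : X -> Y) := forall x y, leX x y -> leY (f x) (f y).
Definition nonincr (X : Type) (leX : X -> X -> Prop) (Y : Type) (leY : Y -> Y -> Prop)
  (f : X -> Y) := forall x y, leX x y -> leY (f y) (f x).

Definition is_distr (X : choiceType) (mu : X -> R) : Prop :=
  [/\ forall x, 0 <= mu x,
      countable [set x | mu x != 0] &
      (\esum_(x in [set: X]) (mu x)%:E = 1)%E].

(* expectation of a non-negative function (extended real valued) *)
Definition Expect (X : choiceType) (mu : X -> R) (g : X -> R) : \bar R :=
  \esum_(x in [set: X]) (mu x * g x)%:E.

Definition is_pushforward (X Y : choiceType) (mu : X -> R) (F : X -> Y) (nu : Y -> R) : Prop :=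
  forall y, (nu y)%:E = \esum_(x in [set x | F x = y]) (mu x)%:E.

Definition is_partition (P : {fset {fset V}}) : Prop :=
  (forall A, A \in P -> A != fset0) /\
  (forall A B, A \in P -> B \in P -> A != B -> [disjoint A & B]).

Definition fbigU (P : {fset {fset V}}) : {fset V} := \bigcup_(A <- P) A.

Definition coarsens (T S : {fset {fset V}}) : Prop :=
  fbigU T = fbigU S /\
  (forall A, A \in T -> exists F : {fset {fset V}}, F `<=` S /\ A = fbigU F).

Definition PNA (D : {fset V}) (mu : Memory D -> R) (S : {fset {fset V}}) : Prop :=
  fbigU S `<=` D /\
  forall (T : {fset {fset V}}) (f : forall A : {fset V}, Memory A -> R),
    is_partition T -> coarsens T S ->
    (forall A, A \in T -> forall m, 0 <= f A m) ->
    ((forall A, A \in T -> nondecr (@mem_le A) (fun x y : R => x <= y) (f A)) \/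
     (forall A, A \in T -> nonincr (@mem_le A) (fun x y : R => x <= y) (f A))) ->
    (Expect mu (fun m => (\prod_(A <- T) f A (restr A m))%R)
      <= \prod_(A <- T) Expect mu (fun m => f A (restr A m)))%E.

(* the joined memory  g_1 ⋈ ... ⋈ g_N  with g_i : Mem[T_i], T_i disjoint *)
Definition join_mem (N : nat) (Tf : 'I_N -> {fset V}) (T : {fset V})
  (g : forall i : 'I_N, Memory (Tf i)) : Memory T :=
  @finfun T (fun=> R) (fun t : T =>
  match [pick i : 'I_N | val t \in Tf i] with
                  | Some i => mem_ext (g i) (val t)
                  | None => 0 end).

End Defs.

From HB Require Import structures.
From mathcomp Require Import all_boot all_order all_algebra.
From mathcomp Require Import finmap.
From mathcomp Require Import boolp classical_sets cardinality reals ereal esum fsbigop.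
Import Order.TTheory GRing.Theory Num.Theory.
Local Open Scope ring_scope.
Local Open Scope fset_scope.
Set Implicit Arguments.
Unset Strict Implicit.
Unset Printing Implicit Defensive.

(* Every block A of a coarsening of [T_1, ..., T_N] is a union of some T_i; pulling A
   back to the union of the corresponding S_i gives a coarsening of [S_1, ..., S_N].
   A test function g_A applied to the image memory restricted to A only reads
   f_i (p_{S_i} m) for T_i inside A, so it is a test function of p_{pull A} m, monotone
   in the direction of g_A composed with that of the f_i.  The S-PNA inequality for
   the pulled-back blocks is then the T-PNA inequality for mu', since expectations
   under mu' are expectations under mu of the composite. *)

Section Expectation.
Variable R : realType.
Local Open Scope ereal_scope.

Lemma ge0_esumZl (T : choiceType) (D : set T) (a : T -> \bar R) (r : R) :
  (0 <= r)%R -> (forall i, 0 <= a i) ->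
  \esum_(i in D) (r%:E * a i) = r%:E * \esum_(i in D) a i.
Proof.
move=> r0 a0; rewrite /esum -ereal_supZl //; last first.
  by apply/set0P; exists 0; exists set0; [exact: fsets_set0 | rewrite fsbig_set0].
congr ereal_sup; apply/seteqP; split => x /=.
  by case=> A FA <-; exists (\sum_(i \in A) a i); [exists A | rewrite ge0_mule_fsumr].
by case=> _ [A FA <-] <-; exists A => //; rewrite ge0_mule_fsumr.
Qed.

Lemma Expect_pushforward (X Y : choiceType) (mu : X -> R) (F : X -> Y) (nu : Y -> R)
    (G : Y -> R) :
  (forall x, 0 <= mu x)%R -> (forall y, 0 <= G y)%R -> is_pushforward mu F nu ->
  Expect nu G = Expect mu (G \o F).
Proof.
move=> mu_ge0 G_ge0 nuE; rewrite /Expect.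
transitivity (\esum_(y in [set: Y]) \esum_(x in [set x | F x = y]) (G y * mu x)%:E).
  by apply: eq_esum => y _; rewrite mulrC EFinM nuE -ge0_esumZl.
rewrite esum_esum; last by move=> y x _ _; rewrite lee_fin mulr_ge0.
rewrite (@reindex_esum _ _ _ [set: X] _ (fun x => (F x, x))).
  by apply: eq_esum => x _ /=; rewrite mulrC.
split=> [x _ //| x1 x2 _ _ [] // | [y x] [_ /= <-]].
by exists x.
Qed.

End Expectation.

Section Memories.
Variables (V : choiceType) (R : realType).
Implicit Types (A B : {fset V}).

Lemma mem_extE B (m : Memory R B) x (xB : x \in B) : mem_ext m x = m [` xB].
Proof. by rewrite /mem_ext insubT. Qed.

Lemma mem_extN B (m : Memory R B) x : x \notin B -> mem_ext m x = 0.
Proof. by move=> xB; rewrite /mem_ext insubN. Qed.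

Lemma le_mem_ext B (m1 m2 : Memory R B) x :
  mem_le m1 m2 -> mem_ext m1 x <= mem_ext m2 x.
Proof.
move=> m12; have [xB | xB] := boolP (x \in B); last by rewrite !mem_extN.
by rewrite (mem_extE m1 xB) (mem_extE m2 xB).
Qed.

Lemma le_restr A B (m1 m2 : Memory R B) :
  mem_le m1 m2 -> mem_le (restr A m1) (restr A m2).
Proof. by move=> m12 a; rewrite !ffunE le_mem_ext. Qed.

Lemma restr_restr A B C (m : Memory R C) : A `<=` B -> restr A (restr B m) = restr A m.
Proof.
move=> /fsubsetP AB; apply/ffunP => a; rewrite !ffunE.
by rewrite (mem_extE (restr B m) (AB _ (fsvalP a))) ffunE.
Qed.

Lemma le_join_mem (N : nat) (Tf : 'I_N -> {fset V}) (T : {fset V})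
    (g1 g2 : forall i : 'I_N, Memory R (Tf i)) :
  (forall i, mem_le (g1 i) (g2 i)) -> mem_le (join_mem T g1) (join_mem T g2).
Proof. by move=> g12 t; rewrite !ffunE; case: pickP => [i _ | _ //]; apply: le_mem_ext. Qed.

End Memories.

Section FiniteUnions.
Variable V : choiceType.

Lemma in_fbigU (Q : {fset {fset V}}) x :
  reflect (exists2 A, A \in Q & x \in A) (x \in fbigU Q).
Proof.
apply: (iffP (bigfcupP _ _ _ _)) => [[A /andP[AQ _] xA] | [A AQ xA]]; first by exists A.
by exists A; rewrite ?AQ.
Qed.

Lemma in_bigfcup_ord (N : nat) (p : pred 'I_N) (F : 'I_N -> {fset V}) x :
  reflect (exists2 i, p i & x \in F i) (x \in \bigcup_(i | p i) F i).
Proof.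
apply: (iffP (bigfcupP _ _ _ _)) => [[i /andP[_ pi] xi] | [i pi xi]]; first by exists i.
by exists i; rewrite ?mem_index_enum ?pi.
Qed.

Lemma fbigU_imfset (N : nat) (F : 'I_N -> {fset V}) :
  fbigU [fset F i | i in 'I_N] = \bigcup_(i in 'I_N) F i.
Proof.
apply/fsetP => x; apply/in_fbigU/in_bigfcup_ord => [[A /imfsetP[i _ ->] xi] | [i _ xi]].
  by exists i.
by exists (F i); rewrite ?in_imfset.
Qed.

Lemma disjoint_blocks_eq (N : nat) (F : 'I_N -> {fset V}) i j x :
  (forall i j, i != j -> [disjoint F i & F j]) -> x \in F i -> x \in F j -> i = j.
Proof.
move=> Fdisj xi xj; apply/eqP; apply: contraT => ij.
by move/fdisjointP: (Fdisj _ _ ij) => /(_ x xi); rewrite xj.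
Qed.

End FiniteUnions.

Section Pullback.
Variables (V : choiceType) (R : realType) (N : nat) (Sf Tf : 'I_N -> {fset V}).
Hypotheses (Sf_neq0 : forall i, Sf i != fset0)
           (Sf_disj : forall i j, i != j -> [disjoint Sf i & Sf j])
           (Tf_neq0 : forall i, Tf i != fset0)
           (Tf_disj : forall i j, i != j -> [disjoint Tf i & Tf j]).
Variable P : {fset {fset V}}.
Hypothesis P_coarsens : coarsens P [fset Tf i | i in 'I_N].
Implicit Types (A B : {fset V}).

Definition pull A := \bigcup_(i | Tf i `<=` A) Sf i.
Definition push B := \bigcup_(i | Sf i `<=` B) Tf i.

Lemma coarsening_block_sub A i x : A \in P -> x \in A -> x \in Tf i -> Tf i `<=` A.
Proof.
move=> AP xA xi; have [F [/fsubsetP FT AF]] := P_coarsens.2 A AP; subst A.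
have [B BF xB] := in_fbigU _ _ xA; have /imfsetP[j _ Bj] := FT _ BF.
move: BF xB; rewrite Bj => jF xj; rewrite -(disjoint_blocks_eq Tf_disj xj xi).
by apply/fsubsetP => y yj; apply/in_fbigU; exists (Tf j).
Qed.

Lemma in_some_Tf x : x \in fbigU P -> exists i, x \in Tf i.
Proof.
by rewrite P_coarsens.1 => /in_fbigU[_ /imfsetP[i _ ->] xi]; exists i.
Qed.

Lemma sub_pull A i : Tf i `<=` A -> Sf i `<=` pull A.
Proof. by move=> iA; apply/fsubsetP => s si; apply/in_bigfcup_ord; exists i. Qed.

Lemma pull_sub A i : Sf i `<=` pull A -> Tf i `<=` A.
Proof.
move=> /fsubsetP iA; have /fset0Pn[s si] := Sf_neq0 i.
have /in_bigfcup_ord[j jA sj] := iA _ si.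
by rewrite (disjoint_blocks_eq Sf_disj si sj).
Qed.

Lemma push_pull A : A \in P -> push (pull A) = A.
Proof.
move=> AP; apply/fsetP => x; apply/in_bigfcup_ord/idP => [[i /pull_sub iA xi] | xA].
  exact: (fsubsetP iA).
have [i xi] : exists i, x \in Tf i by apply: in_some_Tf; apply/in_fbigU; exists A.
by exists i => //; apply/sub_pull/(coarsening_block_sub AP xA).
Qed.

Lemma pull_inj : {in P &, injective pull}.
Proof. by move=> A B AP BP AB; rewrite -(push_pull AP) AB push_pull. Qed.

Lemma pull_partition : is_partition P -> is_partition [fset pull A | A in P].
Proof.
move=> [P_neq0 P_disj]; split=> [_ /imfsetP[A AP ->] | _ B2 /imfsetP[A1 A1P ->]].
  have /fset0Pn[x xA] := P_neq0 A AP.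
  have [i xi] : exists i, x \in Tf i by apply: in_some_Tf; apply/in_fbigU; exists A.
  have /fset0Pn[s si] := Sf_neq0 i.
  apply/fset0Pn; exists s.
  exact: (fsubsetP (sub_pull (coarsening_block_sub AP xA xi))).
move=> /imfsetP[A2 A2P ->] pull12; have A12 : A1 != A2 by apply: contraNneq pull12 => ->.
apply/fdisjointP => s /in_bigfcup_ord[i i1 si]; apply/negP => /in_bigfcup_ord[j j2 sj].
move: j2; rewrite -(disjoint_blocks_eq Sf_disj si sj) => i2.
have /fset0Pn[t ti] := Tf_neq0 i.
move/fdisjointP: (P_disj _ _ A1P A2P A12) => /(_ t (fsubsetP i1 _ ti)).
by rewrite (fsubsetP i2).
Qed.

Lemma pull_coarsens : coarsens [fset pull A | A in P] [fset Sf i | i in 'I_N].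
Proof.
split=> [|_ /imfsetP[A AP ->]].
  apply/fsetP => s; apply/in_fbigU/in_fbigU
    => [[_ /imfsetP[A AP ->]] | [_ /imfsetP[i _ ->] si]].
    by move=> /in_bigfcup_ord[i _ si]; exists (Sf i); rewrite ?in_imfset.
  have /fset0Pn[t ti] := Tf_neq0 i.
  have [A AP tA] : exists2 A, A \in P & t \in A.
    by apply/in_fbigU; rewrite P_coarsens.1 fbigU_imfset; apply/in_bigfcup_ord; exists i.
  exists (pull A); first by rewrite in_imfset.
  exact: (fsubsetP (sub_pull (coarsening_block_sub AP tA ti))).
exists [fset Sf i | i in [seq i <- enum 'I_N | Tf i `<=` A]]; split.
  by apply/fsubsetP => _ /imfsetP[i _ ->]; rewrite in_imfset.
apply/fsetP => s; apply/in_bigfcup_ord/in_fbigU => [[i iA si] | [B /imfsetP[i]]].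
  by exists (Sf i); rewrite // in_imfset //= mem_filter iA mem_enum.
by rewrite /= mem_filter => /andP[iA _] -> si; exists i.
Qed.

Variables (T : {fset V}) (f : forall i : 'I_N, Memory R (Sf i) -> Memory R (Tf i)).
Arguments f : clear implicits.

Definition join_image {B} (m : Memory R B) : Memory R T :=
  join_mem T (fun i => f i (restr (Sf i) m)).

Lemma join_image_nondecr B (m1 m2 : Memory R B) :
  (forall i, nondecr (@mem_le V R (Sf i)) (@mem_le V R (Tf i)) (f i)) ->
  mem_le m1 m2 -> mem_le (join_image m1) (join_image m2).
Proof. by move=> f_nd m12; apply: le_join_mem => i; apply/f_nd/le_restr. Qed.

Lemma join_image_nonincr B (m1 m2 : Memory R B) :
  (forall i, nonincr (@mem_le V R (Sf i)) (@mem_le V R (Tf i)) (f i)) ->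
  mem_le m1 m2 -> mem_le (join_image m2) (join_image m1).
Proof. by move=> f_ni m12; apply: le_join_mem => i; apply/f_ni/le_restr. Qed.

Lemma restr_join_image_pull A B (m : Memory R B) : A \in P ->
  restr A (join_image (restr (pull A) m)) = restr A (join_image m).
Proof.
move=> AP; apply/ffunP => a; rewrite !ffunE /mem_ext; case: insubP => [t _ ta | //].
rewrite !ffunE; case: pickP => [i ti | //]; rewrite restr_restr //.
by apply/sub_pull/(coarsening_block_sub AP _ ti); rewrite ta fsvalP.
Qed.

(* [push] recovers [A] from the block [pull A] (lemma [push_pull]), which makes the
   pulled-back test function independent of the choice of A. *)
Definition pull_test (g : forall A, Memory R A -> R) B (m : Memory R B) : R :=
  g (push B) (restr (push B) (join_image m)).

Lemma pull_testE g A B (m : Memory R B) : A \in P ->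
  pull_test g (restr (pull A) m) = g A (restr A (join_image m)).
Proof. by move=> AP; rewrite /pull_test push_pull // restr_join_image_pull. Qed.

Lemma pull_test_ge0 g : (forall A, A \in P -> forall m, 0 <= g A m) ->
  forall B, B \in [fset pull A | A in P] -> forall m : Memory R B, 0 <= pull_test g m.
Proof.
by move=> g_ge0 _ /imfsetP[A AP ->] m; rewrite /pull_test push_pull //; apply: g_ge0.
Qed.

Lemma pull_test_monotone g :
  (forall i, nondecr (@mem_le V R (Sf i)) (@mem_le V R (Tf i)) (f i)) \/
  (forall i, nonincr (@mem_le V R (Sf i)) (@mem_le V R (Tf i)) (f i)) ->
  (forall A, A \in P -> nondecr (@mem_le V R A) (fun x y : R => x <= y) (g A)) \/
  (forall A, A \in P -> nonincr (@mem_le V R A) (fun x y : R => x <= y) (g A)) ->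
  (forall B, B \in [fset pull A | A in P] ->
     nondecr (@mem_le V R B) (fun x y : R => x <= y) (pull_test g (B:=B))) \/
  (forall B, B \in [fset pull A | A in P] ->
     nonincr (@mem_le V R B) (fun x y : R => x <= y) (pull_test g (B:=B))).
Proof.
move=> [f_nd | f_ni] [g_nd | g_ni]; [left | right | right | left];
  move=> _ /imfsetP[A AP ->] m1 m2 m12; rewrite /pull_test push_pull //.
- exact/g_nd/le_restr/join_image_nondecr.
- exact/g_ni/le_restr/join_image_nondecr.
- exact/g_nd/le_restr/join_image_nonincr.
- exact/g_ni/le_restr/join_image_nonincr.
Qed.

End Pullback.

Unset Implicit Arguments.

Theorem mainTheorem18 (V : choiceType) (R : realType)
  (S T : {fset V}) (N : nat) (Sf Tf : 'I_N -> {fset V})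
  (f : forall i : 'I_N, Memory R (Sf i) -> Memory R (Tf i))
  (mu : Memory R S -> R) (mu' : Memory R T -> R) :
  is_distr mu ->
  (forall i, Sf i != fset0) -> (forall i j, i != j -> [disjoint Sf i & Sf j]) ->
  \bigcup_(i in 'I_N) Sf i = S ->
  (forall i, Tf i != fset0) -> (forall i j, i != j -> [disjoint Tf i & Tf j]) ->
  \bigcup_(i in 'I_N) Tf i = T ->
  ((forall i, nondecr (@mem_le V R (Sf i)) (@mem_le V R (Tf i)) (f i)) \/
   (forall i, nonincr (@mem_le V R (Sf i)) (@mem_le V R (Tf i)) (f i))) ->
  is_pushforward mu
    (fun m : Memory R S => join_mem T (fun i => f i (restr (Sf i) m))) mu' ->
  PNA mu [fset Sf i | i in 'I_N] ->
  PNA mu' [fset Tf i | i in 'I_N].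
Proof.
move=> [mu_ge0 _ _] Sf_neq0 Sf_disj _ Tf_neq0 Tf_disj TU f_mon mu'E [_ PNA_mu].
split=> [|P g P_part P_co g_ge0 g_mon]; first by rewrite fbigU_imfset TU.
have Expect_mu' G :
    (forall m, 0 <= G m) -> Expect mu' G = Expect mu (G \o join_image T f) :=
  fun G_ge0 => Expect_pushforward mu_ge0 G_ge0 mu'E.
have testE A (m : Memory R S) : A \in P ->
    pull_test T f g (restr (pull Sf Tf A) m) = g A (restr A (join_image T f m)).
  exact: (pull_testE Sf_neq0 Sf_disj Tf_disj P_co).
have pull_inj_P := pull_inj Sf_neq0 Sf_disj Tf_disj P_co.
have lhsE : Expect mu' (fun m' => \prod_(A <- P) g A (restr A m')) =
    Expect mu (fun m =>
      \prod_(B <- [fset pull Sf Tf A | A in P]) pull_test T f g (restr B m)).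
  rewrite Expect_mu' => [|m]; last by rewrite /= big_seq; apply: prodr_ge0 => A /g_ge0.
  congr Expect; apply: funext => m /=; rewrite big_imfset //=.
  by apply: eq_big_seq => A AP; rewrite testE.
have rhsE A : A \in P -> Expect mu' (fun m' => g A (restr A m')) =
    Expect mu (fun m => pull_test T f g (restr (pull Sf Tf A) m)).
  move=> AP; rewrite Expect_mu' => [|m]; last exact: g_ge0.
  by congr Expect; apply: funext => m /=; rewrite testE.
rewrite lhsE (eq_big_seq _ rhsE).
have := PNA_mu [fset pull Sf Tf A | A in P] (pull_test T f g).
rewrite big_imfset //=; apply.
- exact: pull_partition.
- exact: pull_coarsens.
- exact: pull_test_ge0.
- exact: pull_test_monotone.
Qed.
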